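(* Consider the type with a single binary operation, and let $\mathcal{CG}$ be the variety of commutative groupoids (defined by $xy=yx$). Then every algebra in the Mal'tsev product $\mathcal{CG}\circ\mathcal{S}$ satisfies the quasi-identity $$(zx=x\ \&\ zy=y\ \&\ xz=yz)\ \rightarrow\ (xy=yx).$$
   Context: $\mathcal{S}$ is the variety of semilattices (in this type, the groupoids satisfying all identities with the same variables on both sides). $\mathcal{CG}\circ\mathcal{S}$ is the class of all groupoids $A$ having a congruence $\theta$ such that $A/\theta$ is a semilattice and every $\theta$-class (a subgroupoid) is commutative. *)

Definition is_congruence {A : Type} (m : A -> A -> A) (theta : A -> A -> Prop) : Prop :=
  (forall x, theta x x) /\
  (forall x y, theta x y -> theta y x) /\
  (forall x y z, theta x y -> theta y z -> theta x z) /\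
  (forall x x' y y', theta x x' -> theta y y' -> theta (m x y) (m x' y')).

(* The quotient groupoid A/theta is a semilattice: it is idempotent,
   commutative and associative (these three identities axiomatize the variety
   of semilattices, i.e. the regular identities). *)
Definition quotient_is_semilattice {A : Type} (m : A -> A -> A) (theta : A -> A -> Prop) : Prop :=
  (forall x, theta (m x x) x) /\
  (forall x y, theta (m x y) (m y x)) /\
  (forall x y z, theta (m (m x y) z) (m x (m y z))).

Definition classes_commutative {A : Type} (m : A -> A -> A) (theta : A -> A -> Prop) : Prop :=
  forall x y, theta x y -> m x y = m y x.

Definition in_CG_o_S {A : Type} (m : A -> A -> A) : Prop :=
  exists theta : A -> A -> Prop,
    is_congruence m theta /\ quotient_is_semilattice m theta /\ classes_commutative m theta.


(* Modulo the congruence, x = zx ~ xz = yz ~ zy = y, so x and y lie in one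
   class, and classes are commutative. *)

Section CommutativeModulo.

Context {A : Type}.
Variables (m : A -> A -> A) (theta : A -> A -> Prop).
Hypothesis theta_trans : forall x y z, theta x y -> theta y z -> theta x z.
Hypothesis theta_comm : forall x y, theta (m x y) (m y x).

Lemma related_of_left_absorbed (x y z : A) :
  m z x = x -> m z y = y -> m x z = m y z -> theta x y.
Proof.
  intros Hzx Hzy Hxz.
  apply theta_trans with (m y z).
  - pose proof (theta_comm z x) as Hx. rewrite Hzx, Hxz in Hx. exact Hx.
  - pose proof (theta_comm y z) as Hy. rewrite Hzy in Hy. exact Hy.
Qed.

End CommutativeModulo.

Theorem proposition4p14 (A : Type) (m : A -> A -> A) :
  in_CG_o_S m ->
  forall x y z : A,
    m z x = x -> m z y = y -> m x z = m y z -> m x y = m y x.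
Proof.
  intros [theta [[_ [_ [theta_trans _]]] [[_ [theta_comm _]] classes_comm]]] x y z Hzx Hzy Hxz.
  apply classes_comm.
  exact (related_of_left_absorbed m theta theta_trans theta_comm x y z Hzx Hzy Hxz).
Qed.
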